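(* Let $(X,d)$ be a compact metric space, $\mathbb{F}=\{f_n:n\in\mathbb{N}\}$ a sequence of continuous surjective self-maps of $X$, and $k\in\mathbb{N}$. If $(X,\mathbb{F})$ is syndetically (resp. cofinitely) sensitive then $(X,\mathbb{F}_k)$ is syndetically (resp. cofinitely) sensitive. If the family $\mathbb{F}$ is feeble open, then $(X,\mathbb{F}_k)$ syndetically (resp. cofinitely) sensitive implies $(X,\mathbb{F})$ syndetically (resp. cofinitely) sensitive.
   Context: Write $\omega_n=f_n\circ\cdots\circ f_1$ and, for $n>k$, $\omega^k_n=f_n\circ\cdots\circ f_{k+1}$; $\mathbb{F}_k=\{f_n:n\ge k+1\}$ is the truncated family. $(X,\mathbb{F})$ is syndetically sensitive if there is $\delta>0$ such that for every non-empty open $U$ the set $\{n\in\mathbb{N}:\mathrm{diam}(\omega_n(U))>\delta\}$ is syndetic (has bounded gaps); it is cofinitely sensitive if there is $\delta>0$ such that for every non-empty open $U$ there is $K$ with $\mathrm{diam}(\omega_n(U))>\delta$ for all $n\ge K$. The same notions for $(X,\mathbb{F}_k)$ use $\omega^k_n$ ($n>k$). $\mathbb{F}$ is feeble open if for every non-empty open $U$ and every $f\in\mathbb{F}$, $f(U)$ has non-empty interior. *)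

From HB Require Import structures.
From mathcomp Require Import all_boot all_order all_algebra.
From mathcomp Require Import all_classical all_reals all_analysis.
Set Implicit Arguments. Unset Strict Implicit. Unset Printing Implicit Defensive.
Import Order.TTheory GRing.Theory Num.Theory.
Local Open Scope classical_set_scope.
Local Open Scope ring_scope.

Section Defs.
Context {R : realType} {X : metricType R}.

Definition diam (A : set X) : R := sup [set mdist x y | x in A & y in A].

(* The family F = {f_n : n >= 1} is given by f : nat -> X -> X (f 0 unused).
   omega f k n = f_n o ... o f_(k+1) for n > k (identity otherwise);
   omega f 0 n = omega_n = f_n o ... o f_1. *)
Fixpoint omega (f : nat -> X -> X) (k n : nat) (x : X) : X :=
  match n with
  | 0 => x
  | m.+1 => if (k < m.+1)%N then f m.+1 (omega f k m x) else x
  end.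

Definition syndetic (S : set nat) : Prop :=
  exists L : nat, forall m : nat, exists n : nat, (m <= n <= m + L)%N /\ S n.

Definition synd_sensitive_k (f : nat -> X -> X) (k : nat) : Prop :=
  exists delta : R, 0 < delta /\
    forall U : set X, open U -> U !=set0 ->
      syndetic [set n | (k < n)%N /\ delta < diam (omega f k n @` U)].

Definition cof_sensitive_k (f : nat -> X -> X) (k : nat) : Prop :=
  exists delta : R, 0 < delta /\
    forall U : set X, open U -> U !=set0 ->
      exists K : nat, forall n : nat, (K <= n)%N -> (k < n)%N ->
        delta < diam (omega f k n @` U).

Definition feeble_open (f : nat -> X -> X) : Prop :=
  forall n : nat, (0 < n)%N -> forall U : set X, open U -> U !=set0 ->
    (f n @` U)^° !=set0.

End Defs.

From HB Require Import structures.
From mathcomp Require Import all_boot all_order all_algebra.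
From mathcomp Require Import all_classical all_reals all_analysis.
From mathcomp Require Import zify.
Import Order.TTheory GRing.Theory Num.Theory numFieldNormedType.Exports.
Local Open Scope classical_set_scope.
Local Open Scope ring_scope.

(* Since omega_n = omega^k_n o omega_k for n >= k, open sets can be carried
   through omega_k.  If the maps are continuous and surjective,
   W = omega_k^-1(U) is a non-empty open set with omega_n(W) = omega^k_n(U), so
   sensitivity of F passes to F_k.  Conversely, if F is feeble open, omega_k(U)
   contains a non-empty open V, and omega^k_n(V) is contained in omega_n(U);
   a compact metric space is bounded, so diameters are monotone and
   sensitivity of F_k passes to F. *)

Section MetricDiameter.
Context {R : realType} {X : metricType R}.

Lemma mdist_continuous (x : X) : continuous (mdist x : X -> R).
Proof.
move=> y; apply/cvgrPdist_lt => e e0; near=> z.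
have : ball y e z by near: z; exact: nbhsx_ballx.
rewrite ballEmdist /= => yz.
have le_dist : `|mdist x y - mdist x z| <= mdist y z.
  suff : mdist x z - mdist y z <= mdist x y <= mdist x z + mdist y z.
    by rewrite -ler_distl; apply.
  by rewrite lerBlDr metric_triangle [mdist y z]metric_sym metric_triangle.
exact: le_lt_trans le_dist yz.
Unshelve. all: by end_near.
Qed.

Lemma compact_mdist_bounded :
  compact [set: X] -> exists M, forall x y : X, mdist x y <= M.
Proof.
move=> cX; have [[x0 _]|X0] := pselect ([set: X] !=set0); last first.
  by exists 0 => x; case: X0; exists x.
have /ex_strict_bound_gt0[M _ /= hM] : bounded_set (mdist x0 @` [set: X]).
  apply/compact_bounded/continuous_compact => //.
  exact/continuous_subspaceT/mdist_continuous.
exists (M + M) => x y; apply: le_trans (metric_triangle x x0 y) _.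
rewrite metric_sym; apply: lerD; apply/ltW/(le_lt_trans (ler_norm _))/hM.
  by exists x.
by exists y.
Qed.

(* Boundedness is needed: [sup] of a set that is not bounded above is [0]. *)
Lemma le_diam (A B : set X) : (exists M, forall x y : X, mdist x y <= M) ->
  A !=set0 -> A `<=` B -> diam A <= diam B.
Proof.
move=> [M hM] [a Aa] AB; apply: ge_sup.
  by exists (mdist a a), a => //; exists a.
move=> _ [x Ax [y Ay <-]]; apply: sup_upper_bound.
  split; last by exists M => _ [u _ [v _ <-]].
  by exists (mdist a a), a; [exact: AB | exists a; [exact: AB|]].
by exists x; [exact: AB | exists y; [exact: AB|]].
Qed.

End MetricDiameter.

Section Omega.
Context {R : realType} {X : metricType R} (f : nat -> X -> X).

Lemma omega_comp j k n x : (j <= k <= n)%N ->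
  omega f k n (omega f j k x) = omega f j n x.
Proof.
elim: n => [|m IH] /andP[jk kn].
  by move: jk kn; rewrite leqn0 => ? /eqP ->.
have [->|km] := eqVneq k m.+1; first by rewrite /= ltnn.
have {}kn : (k <= m)%N by rewrite -ltnS ltn_neqAle km kn.
by rewrite /= !ltnS (leq_trans jk kn) kn IH ?jk.
Qed.

Lemma continuous_omega j : (forall n, (j < n)%N -> continuous (f n)) ->
  forall n, continuous (omega f j n).
Proof.
move=> fC; elim=> [|m IH] x /=; first exact: cvg_id.
case: (j < m.+1)%N (fC m.+1) => [/(_ isT) fmC|_]; last exact: cvg_id.
exact: continuous_comp (IH x) (fmC _).
Qed.

Lemma omega_surjective j :
  (forall n, (j < n)%N -> forall y, exists x, f n x = y) ->
  forall n y, exists x, omega f j n x = y.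
Proof.
move=> fS; elim=> [|m IH] y /=; first by exists y.
case: (j < m.+1)%N (fS m.+1) => [/(_ isT) fmS|_]; last by exists y.
have [z <-] := fmS y; have [x <-] := IH z; by exists x.
Qed.

Lemma feeble_open_omega j n (U : set X) :
  feeble_open f -> open U -> U !=set0 ->
  exists V, [/\ open V, V !=set0 & V `<=` omega f j n @` U].
Proof.
move=> fO oU U0; have U_id : exists V, [/\ open V, V !=set0 & V `<=` id @` U].
  by exists U; split => // x Ux; exists x.
elim: n => [//|m [V [oV V0 VU]]] /=; case: (j < m.+1)%N => //.
exists (f m.+1 @` V)°; split; [exact: open_interior | exact: fO | ].
by move=> _ /interior_subset[y /VU[x Ux <-] <-]; exists x.
Qed.

End Omega.

Lemma syndeticS {S T : set nat} : S `<=` T -> syndetic S -> syndetic T.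
Proof.
by move=> ST [L hL]; exists L => m; have [n [mn /ST Tn]] := hL m; exists n.
Qed.

Lemma syndeticI_gt k {S : set nat} :
  syndetic S -> syndetic (S `&` [set n | (k < n)%N]).
Proof.
move=> [L hL]; exists (L + k.+1)%N => m.
have [n [/andP[mn nm] Sn]] := hL (m + k.+1)%N.
by exists n; split; [apply/andP; split | split => //=]; lia.
Qed.

Section Domination.
Context {R : realType} {X : metricType R} (f : nat -> X -> X).

Definition diam_dominated (j j' : nat) :=
  forall U : set X, open U -> U !=set0 ->
  exists W : set X, [/\ open W, W !=set0 &
    forall n, (j < n)%N -> (j' < n)%N ->
      diam (omega f j n @` W) <= diam (omega f j' n @` U)].

Lemma synd_sensitive_dominated j j' :
  diam_dominated j j' -> synd_sensitive_k f j -> synd_sensitive_k f j'.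
Proof.
move=> dom [d [d0 hd]]; exists d; split => // U oU U0.
have [W [oW W0 le_diamW]] := dom U oU U0.
apply: (syndeticS _ (syndeticI_gt j' (hd W oW W0))) => n [[jn dW] j'n].
by split => //; apply: lt_le_trans dW (le_diamW n jn j'n).
Qed.

Lemma cof_sensitive_dominated j j' :
  diam_dominated j j' -> cof_sensitive_k f j -> cof_sensitive_k f j'.
Proof.
move=> dom [d [d0 hd]]; exists d; split => // U oU U0.
have [W [oW W0 le_diamW]] := dom U oU U0; have [K hK] := hd W oW W0.
exists (maxn K j.+1) => n; rewrite geq_max => /andP[Kn jn] j'n.
exact: lt_le_trans (hK n Kn jn) (le_diamW n jn j'n).
Qed.

Lemma diam_dominated_truncate j k : (j <= k)%N ->
  (forall n, (j < n)%N -> continuous (f n)) ->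
  (forall n, (j < n)%N -> forall y, exists x, f n x = y) ->
  diam_dominated j k.
Proof.
move=> jk fC fS U oU [u Uu]; have omega_surj := omega_surjective f j fS k.
exists (omega f j k @^-1` U); split.
- by apply: open_comp => // x _; exact: continuous_omega.
- by have [x xu] := omega_surj u; exists x; rewrite /= xu.
move=> n _ kn.
suff -> : omega f j n @` (omega f j k @^-1` U) = omega f k n @` U by [].
have jkn : (j <= k <= n)%N by rewrite jk ltnW.
apply/seteqP; split => _ [x xU <-].
  by exists (omega f j k x) => //; rewrite omega_comp.
move: xU; have [y <-] := omega_surj x => xU.
by exists y => //; rewrite omega_comp.
Qed.

Lemma diam_dominated_untruncate j k : (j <= k)%N ->
  (exists M, forall x y : X, mdist x y <= M) -> feeble_open f ->
  diam_dominated k j.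
Proof.
move=> jk bdd fO U oU U0.
have [V [oV V0 VU]] := feeble_open_omega f j k U fO oU U0.
exists V; split => // n kn _; apply: le_diam bdd (image_nonempty _ V0) _.
have jkn : (j <= k <= n)%N by rewrite jk ltnW.
by move=> _ [v /VU[x Ux <-] <-]; exists x; rewrite // omega_comp.
Qed.

End Domination.

Theorem mainTheorem7 (R : realType) (X : metricType R) (f : nat -> X -> X)
  (k : nat) :
  compact [set: X] ->
  (forall n : nat, (0 < n)%N -> continuous (f n)) ->
  (forall n : nat, (0 < n)%N -> forall y : X, exists x : X, f n x = y) ->
  ((synd_sensitive_k f 0 -> synd_sensitive_k f k) /\
   (cof_sensitive_k f 0 -> cof_sensitive_k f k)) /\
  (feeble_open f ->
   (synd_sensitive_k f k -> synd_sensitive_k f 0) /\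
   (cof_sensitive_k f k -> cof_sensitive_k f 0)).
Proof.
move=> cX fC fS.
have dom0k : diam_dominated f 0 k by apply: diam_dominated_truncate.
split.
  by split; [exact: synd_sensitive_dominated | exact: cof_sensitive_dominated].
move=> fO; have domk0 : diam_dominated f k 0.
  by apply: diam_dominated_untruncate => //; exact: compact_mdist_bounded.
by split; [exact: synd_sensitive_dominated | exact: cof_sensitive_dominated].
Qed.
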